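(* For every $n$ with $2\le n\le\infty$, the identity $xysxty \approx yxsxty$ is a finite identity basis for the sylvester monoid $\mathrm{sylv}_n$. Consequently, all sylvester monoids of rank at least $2$ (including rank $\infty$) are equationally equivalent.
   Context: Let $\mathcal{A}=\{1<2<3<\cdots\}$, $\mathcal{A}_n=\{1<\cdots<n\}$, $\mathcal{A}_\infty=\mathcal{A}$. A right strict binary search tree is a labelled rooted binary tree (labels in $\mathcal{A}$) in which each node's label is $\ge$ every label in its left subtree and $<$ every label in its right subtree. Inserting $a$ into such a tree $T$: if $T$ is empty, create a node labelled $a$; otherwise, with root label $x$, recursively insert $a$ into the right subtree if $a>x$ and into the left subtree otherwise. For $w=w_1\cdots w_k\in\mathcal{A}^*$, $\mathrm{P}(w)$ is obtained from the empty tree by inserting $w_k,\dots,w_1$ in this order. The relation $u\equiv v\iff\mathrm{P}(u)=\mathrm{P}(v)$ is a congruence, and $\mathrm{sylv}_n=\mathcal{A}_n^*/{\equiv}$. Identities: $\mathcal{X}$ is a countably infinite alphabet; an identity is $\mathbf{u}\approx\mathbf{v}$ with $\mathbf{u},\mathbf{v}\in\mathcal{X}^*$; a monoid $S$ satisfies it if $\varphi(\mathbf{u})=\varphi(\mathbf{v})$ for all maps $\varphi:\mathcal{X}\to S$ (extended to monoid homomorphisms). $\mathbf{u}\approx\mathbf{v}$ is derived from a set $\Sigma$ if there is a sequence $\mathbf{u}=\mathbf{u}_1,\dots,\mathbf{u}_m=\mathbf{v}$ with $\mathbf{u}_i=\mathbf{a}\varphi(\mathbf{p})\mathbf{b}$,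 $\mathbf{u}_{i+1}=\mathbf{a}\varphi(\mathbf{q})\mathbf{b}$ for some words $\mathbf{a},\mathbf{b}\in\mathcal{X}^*$, a monoid endomorphism $\varphi$ of $\mathcal{X}^*$ (letters may go to the empty word), and $\mathbf{p}\approx\mathbf{q}\in\Sigma$. A finite identity basis for $S$ is a finite set $\Sigma$ of identities satisfied by $S$ from which every identity satisfied by $S$ is derived. Two monoids are equationally equivalent if they satisfy the same identities. *)

From mathcomp Require Import all_boot.
Set Implicit Arguments. Unset Strict Implicit. Unset Printing Implicit Defensive.

Inductive tree := Leaf | Node of tree & nat & tree.

Fixpoint insert (a : nat) (T : tree) : tree :=
  match T with
  | Leaf => Node Leaf a Leaf
  | Node l x r => if x < a then Node l x (insert a r) else Node (insert a l) x r
  end.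

(* P(w1...wk): insert wk, ..., w1 in this order, starting from the empty tree. *)
Definition Ptree (w : seq nat) : tree := foldr insert Leaf w.

(* Rank: [Some n] is rank n, [None] is rank infinity. *)
Definition rank := option nat.

Definition in_alph (n : rank) (a : nat) : bool :=
  (1 <= a) && (if n is Some k then a <= k else true).

Definition word_in (n : rank) (w : seq nat) : bool := all (in_alph n) w.

(* Variables: the countably infinite alphabet X is nat; words are seq nat.
   An identity is a pair (u, v) standing for u ≈ v. *)
Definition identity := (seq nat * seq nat)%type.

Definition subst (phi : nat -> seq nat) (u : seq nat) : seq nat :=
  flatten (map phi u).

(* sylv_n = A_n^* / ≡ with u ≡ v iff P(u) = P(v).  Every map X -> sylv_n
   lifts to a map X -> A_n^* (choose representatives), and the induced
   homomorphism X^* -> sylv_n is the class of the substituted word. *)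
Definition sylv_satisfies (n : rank) (u v : seq nat) : Prop :=
  forall phi : nat -> seq nat, (forall x, word_in n (phi x)) ->
    Ptree (subst phi u) = Ptree (subst phi v).

Definition der_step (Sigma : seq identity) (w1 w2 : seq nat) : Prop :=
  exists (a b : seq nat) (phi : nat -> seq nat) (p q : seq nat),
    ((p, q) \in Sigma \/ (q, p) \in Sigma) /\
    w1 = a ++ subst phi p ++ b /\ w2 = a ++ subst phi q ++ b.

Inductive derivable (Sigma : seq identity) : seq nat -> seq nat -> Prop :=
  | der_refl u : derivable Sigma u u
  | der_cons u w v : der_step Sigma u w -> derivable Sigma w v ->
      derivable Sigma u v.

Definition sylv_finite_basis (n : rank) (Sigma : seq identity) : Prop :=
  (forall p q, (p, q) \in Sigma -> sylv_satisfies n p q) /\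
  (forall u v, sylv_satisfies n u v -> derivable Sigma u v).

Definition vx := 0. Definition vy := 1. Definition vs := 2. Definition vt := 3.

Definition sylv_identity : identity :=
  ([:: vx; vy; vs; vx; vt; vy], [:: vy; vx; vs; vx; vt; vy]).

Definition rank_ge2 (n : rank) : bool :=
  if n is Some k then 2 <= k else true.

From mathcomp Require Import all_boot zify.
Set Implicit Arguments. Unset Strict Implicit. Unset Printing Implicit Defensive.

(* Sylvester trees are built by inserting the letters of a word from right to
   left, and two letters whose search paths in a tree diverge may be inserted in
   either order. In a tree that already contains both letters the paths always
   diverge, which is why x y s x t y = y x s x t y holds in every sylv_n.
   Conversely, substituting 1 for x, 2 for y and the empty word for the other
   variables shows that an identity u = v of sylv_n (n >= 2) forces, for all
   letters x and y, as many y's after the last x in u as in v. These invariants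
   make u = v derivable letter by letter: the first letter c of u can be brought
   to the front of v, because every letter before the first c of v recurs later
   in v, as does c, and the identity swaps two adjacent letters that both recur
   later. As the invariants do not depend on n, all these monoids satisfy the
   same identities. *)

Fixpoint separates (a b : nat) (T : tree) : bool :=
  match T with
  | Leaf => false
  | Node l x r => if x < a then separates a b r else (x < b) || separates a b l
  end.

Lemma insertC_separates a b T : a < b -> separates a b T ->
  insert a (insert b T) = insert b (insert a T).
Proof.
move=> ab; elim: T => [|l IHl x r IHr] //=.
case xa: (x < a) => sep.
  by rewrite (ltn_trans xa ab) /= xa (ltn_trans xa ab) IHr.
case xb: (x < b) => /= in sep *; first by rewrite xa xb.
by rewrite xa xb IHl.
Qed.

Lemma separates_insert a b c T : separates a b T -> separates a b (insert c T).
Proof.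
elim: T => [|l IHl x r IHr] //=.
by case: (x < c) => /=; case: (x < a) => //; case: (x < b) => //= /IHl.
Qed.

Lemma separates_insert_self a b T : a < b -> separates a b (insert a T).
Proof.
move=> ab; elim: T => [|l IHl x r IHr] /=; first by rewrite ltnn ab.
by case: ifP => /= xa; rewrite xa // IHl orbT.
Qed.

Lemma separates_Ptree a b w : a < b -> a \in w -> separates a b (Ptree w).
Proof.
move=> ab; elim: w => //= c w IH; rewrite in_cons => /predU1P [<-|/IH].
  exact: separates_insert_self.
exact: separates_insert.
Qed.

(* Two letters already present in a sylvester tree reach it through diverging
   search paths, so inserting them commutes. *)
Lemma insertC_Ptree a b w : a \in w -> b \in w ->
  insert a (insert b (Ptree w)) = insert b (insert a (Ptree w)).
Proof.
move=> aw bw; case: (ltngtP a b) => [ab|ba|-> //].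
  exact: insertC_separates ab (separates_Ptree ab aw).
exact/esym/(insertC_separates ba (separates_Ptree ba bw)).
Qed.

Lemma Ptree_cons_cat a y w : a \in w -> {subset y <= w} ->
  Ptree (a :: y ++ w) = Ptree (y ++ a :: w).
Proof.
move=> aw; elim: y => //= b y IH yw.
have byw : {subset y <= w} by move=> z zy; apply: yw; rewrite in_cons zy orbT.
have bw : b \in w by apply: yw; rewrite mem_head.
rewrite -IH // [LHS]insertC_Ptree // mem_cat ?aw ?bw orbT //.
Qed.

Lemma Ptree_catC x y w : {subset x <= w} -> {subset y <= w} ->
  Ptree (x ++ y ++ w) = Ptree (y ++ x ++ w).
Proof.
elim: x => //= a x IH xw yw.
have x'w : {subset x <= w} by move=> z zx; apply: xw; rewrite in_cons zx orbT.
rewrite IH // -Ptree_cons_cat ?mem_cat ?xw ?mem_head ?orbT //.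
by move=> z /yw zw; rewrite mem_cat zw orbT.
Qed.

Lemma Ptree_xysxty x y s t b :
  Ptree (x ++ y ++ s ++ x ++ t ++ y ++ b) = Ptree (y ++ x ++ s ++ x ++ t ++ y ++ b).
Proof. by apply: Ptree_catC => z zw; rewrite !mem_cat zw ?orbT. Qed.

Lemma Ptree_cat u w : Ptree (u ++ w) = foldr insert (Ptree w) u.
Proof. exact: foldr_cat. Qed.

Lemma subst_cons phi a u : subst phi (a :: u) = phi a ++ subst phi u.
Proof. by []. Qed.

Lemma subst_cat phi u w : subst phi (u ++ w) = subst phi u ++ subst phi w.
Proof. by rewrite /subst map_cat flatten_cat. Qed.

Lemma subst_comp psi phi u :
  subst psi (subst phi u) = subst (fun z => subst psi (phi z)) u.
Proof. by elim: u => // a u IH; rewrite !subst_cons subst_cat IH. Qed.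

Notation sylv_basis := [:: sylv_identity].

Lemma Ptree_subst_identity chi b :
  Ptree (subst chi sylv_identity.1 ++ b) = Ptree (subst chi sylv_identity.2 ++ b).
Proof. by rewrite /subst /= cats0 -!catA; apply: Ptree_xysxty. Qed.

Section Derivations.

Variable Sigma : seq identity.

Lemma derivable_step u v : der_step Sigma u v -> derivable Sigma u v.
Proof. by move=> uv; apply: der_cons uv (der_refl _ _). Qed.

Lemma derivable_trans u w v :
  derivable Sigma u w -> derivable Sigma w v -> derivable Sigma u v.
Proof. by elim=> // u1 w1 v1 uw _ IH /IH; apply: der_cons. Qed.

Lemma der_step_sym u v : der_step Sigma u v -> der_step Sigma v u.
Proof.
move=> [a [b [phi [p [q [pq [-> ->]]]]]]].
by exists a, b, phi, q, p; split; first by case: pq; [right|left].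
Qed.

Lemma derivable_sym u v : derivable Sigma u v -> derivable Sigma v u.
Proof.
elim=> [u1|u1 w1 v1 /der_step_sym/derivable_step wu _ IH]; first exact: der_refl.
exact: derivable_trans IH wu.
Qed.

Lemma derivable_cons c u v : derivable Sigma u v -> derivable Sigma (c :: u) (c :: v).
Proof.
elim=> [u1|u1 w1 v1 [a [b [phi [p [q [pq [e1 e2]]]]]]] _ IH]; first exact: der_refl.
by apply: der_cons IH; exists (c :: a), b, phi, p, q; rewrite e1 e2.
Qed.

End Derivations.

Lemma Ptree_subst_derivable u v : derivable sylv_basis u v ->
  forall psi, Ptree (subst psi u) = Ptree (subst psi v).
Proof.
elim=> // u1 w1 v1 [a [b [phi [p [q [pq [-> ->]]]]]]] _ IH psi.
rewrite -IH !subst_cat !(Ptree_cat (subst psi a)); congr foldr.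
rewrite !subst_comp; move: pq; rewrite !mem_seq1.
by case=> /eqP [-> ->]; [|symmetry]; apply: Ptree_subst_identity.
Qed.

Lemma derivable_sylv_satisfies n u v :
  derivable sylv_basis u v -> sylv_satisfies n u v.
Proof. by move=> uv phi _; apply: Ptree_subst_derivable. Qed.

Lemma der_step_xysxty x y s t b :
  der_step sylv_basis (x :: y :: s ++ x :: t ++ y :: b)
                      (y :: x :: s ++ x :: t ++ y :: b).
Proof.
pose phi z :=
  if z == vx then [:: x] else if z == vy then [:: y] else if z == vs then s else t.
exists [::], b, phi, sylv_identity.1, sylv_identity.2; split.
  by left; rewrite -surjective_pairing mem_head.
by rewrite /subst /phi /vs /vt /= -catA /= -catA.
Qed.

Lemma derivable_swap c d s : c \in s -> d \in s ->
  derivable sylv_basis (c :: d :: s) (d :: c :: s).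
Proof.
move=> /splitPr [s1 s2]; rewrite mem_cat in_cons.
case/or3P => [/splitPr [t1 t2]|/eqP ->|/splitPr [t1 t2]].
- by rewrite -catA; apply/derivable_sym/derivable_step/der_step_xysxty.
- exact: der_refl.
- exact/derivable_step/der_step_xysxty.
Qed.

Lemma derivable_move_front c v1 v2 : c \in v2 -> {subset v1 <= v2} ->
  derivable sylv_basis (v1 ++ c :: v2) (c :: v1 ++ v2).
Proof.
move=> cv2; elim: v1 => [|d v1 IH] v12 /=; first exact: der_refl.
have dv2 : d \in v2 by apply: v12; rewrite mem_head.
apply: derivable_trans (derivable_cons d (IH _)) _.
  by move=> z zv1; apply: v12; rewrite in_cons zv1 orbT.
by apply: derivable_swap; rewrite mem_cat ?cv2 ?dv2 orbT.
Qed.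

(* If [x] does not occur in [w], [after_last x w] is all of [w]. *)
Fixpoint after_last (x : nat) (w : seq nat) : seq nat :=
  match w with
  | [::] => [::]
  | a :: w' => if x \in w' then after_last x w' else if a == x then w' else w
  end.

Lemma after_last_notin x w : x \notin w -> after_last x w = w.
Proof.
elim: w => //= a w IH; rewrite in_cons negb_or => /andP [xa xw].
by rewrite (negbTE xw) eq_sym (negbTE xa).
Qed.

Lemma after_last_catl x w1 w2 : x \notin w2 ->
  after_last x (w1 ++ w2) = after_last x w1 ++ w2.
Proof.
move=> xw2; elim: w1 => [|a w1 IH] /=; first by rewrite after_last_notin.
by rewrite mem_cat (negbTE xw2) orbF IH; case: ifP => //; case: ifP.
Qed.

Lemma after_last_catr x w1 w2 : x \in w2 -> after_last x (w1 ++ w2) = after_last x w2.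
Proof. by move=> xw2; elim: w1 => //= a w1 IH; rewrite mem_cat xw2 orbT. Qed.

Lemma count_after_last y x w : count_mem y (after_last x w) <= count_mem y w.
Proof.
elim: w => //= a w IH; case: ifP => _; first exact: leq_trans IH (leq_addl _ _).
by case: ifP => _ //=; apply: leq_addl.
Qed.

Definition sylv_inv_eq (u v : seq nat) : Prop :=
  forall x y, count_mem y (after_last x u) = count_mem y (after_last x v).

Fixpoint chain2 (k : nat) (T : tree) : tree :=
  if k is k'.+1 then Node (chain2 k' T) 2 Leaf else T.

Fixpoint spine2 (T : tree) : nat :=
  if T is Node l a _ then (if a == 2 then (spine2 l).+1 else 0) else 0.

Lemma insert_chain2 a k T : a <= 2 -> insert a (chain2 k T) = chain2 k (insert a T).
Proof. by move=> a2; elim: k => //= k ->; rewrite ltnNge a2. Qed.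

Lemma spine2_chain2 k T : spine2 T = 0 -> spine2 (chain2 k T) = k.
Proof. by move=> T0; elim: k => //= k ->. Qed.

Definition mark2 (x y z : nat) : seq nat :=
  if z == x then [:: 1] else if z == y then [:: 2] else [::].

Lemma word_in_mark2 n x y z : rank_ge2 n -> word_in n (mark2 x y z).
Proof.
rewrite /mark2 /word_in /in_alph; case: n => [k|] /= k2;
  by case: ifP => _; [|case: ifP => _] => //=; rewrite ?andbT; lia.
Qed.

Lemma Ptree_mark2_notin x y u : x \notin u ->
  Ptree (subst (mark2 x y) u) = chain2 (count_mem y u) Leaf.
Proof.
elim: u => // a u IH; rewrite in_cons negb_or eq_sym => /andP [ax xu].
rewrite subst_cons Ptree_cat IH // /mark2 (negbTE ax) /=.
by case: (a == y) => //=; elim: (count_mem y u) => //= k ->.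
Qed.

(* Under [mark2 x y] the letters [y] after the last [x] become a left chain of
   2's, and everything inserted later sinks below it. *)
Lemma Ptree_mark2_mem x y u : x \in u -> exists l r,
  Ptree (subst (mark2 x y) u) = chain2 (count_mem y (after_last x u)) (Node l 1 r).
Proof.
elim: u => // a u IH; case: (boolP (x \in u)) => [xu _ | xu].
  rewrite subst_cons Ptree_cat /= xu; have [l [r ->]] := IH xu; rewrite /mark2.
  case: (a == x); last case: (a == y); rewrite /= ?insert_chain2 //=; by do 2 eexists.
rewrite in_cons (negbTE xu) orbF => /eqP <-.
rewrite subst_cons Ptree_cat Ptree_mark2_notin // /mark2 /= (negbTE xu) !eqxx.
by rewrite /= insert_chain2 //; exists Leaf, Leaf.
Qed.

Lemma spine2_Ptree_mark2 x y u :
  spine2 (Ptree (subst (mark2 x y) u)) = count_mem y (after_last x u).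
Proof.
case: (boolP (x \in u)) => xu; last first.
  by rewrite Ptree_mark2_notin // after_last_notin // spine2_chain2.
by have [l [r ->]] := Ptree_mark2_mem y xu; rewrite spine2_chain2.
Qed.

Lemma sylv_satisfies_inv_eq n u v :
  rank_ge2 n -> sylv_satisfies n u v -> sylv_inv_eq u v.
Proof.
move=> n2 uv x y; rewrite -!spine2_Ptree_mark2 uv // => z.
exact: word_in_mark2.
Qed.

Lemma derivable_inv_eq u v : derivable sylv_basis u v -> sylv_inv_eq u v.
Proof.
by move=> /(derivable_sylv_satisfies (n := None)); apply: sylv_satisfies_inv_eq.
Qed.

Lemma sylv_inv_eq_count u v y : sylv_inv_eq u v -> count_mem y u = count_mem y v.
Proof.
move=> uv; pose x := (\max_(i <- u ++ v) i).+1.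
have xuv : x \notin u ++ v.
  by apply/negP => /(@leq_bigmax_seq _ _ predT id x)/(_ isT); rewrite ltnn.
move: xuv; rewrite mem_cat negb_or => /andP [xu xv].
by rewrite -(after_last_notin xu) -(after_last_notin xv).
Qed.

Lemma sylv_inv_eq_mem u v x : sylv_inv_eq u v -> (x \in u) = (x \in v).
Proof. by move=> uv; rewrite -!has_pred1 !has_count (sylv_inv_eq_count x uv). Qed.

Lemma sylv_inv_eq_consK c u w : sylv_inv_eq (c :: u) (c :: w) -> sylv_inv_eq u w.
Proof.
move=> cuw x y.
have uw z : count_mem z u = count_mem z w.
  by apply: (@addnI (c == z)); apply: sylv_inv_eq_count cuw.
have mem_uw : (x \in u) = (x \in w) by rewrite -!has_pred1 !has_count uw.
case: (boolP (x \in u)) => xu; first by move: (cuw x y) => /=; rewrite -mem_uw xu.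
by rewrite !after_last_notin -?mem_uw.
Qed.

(* If some [d] before the first [c] of [v] did not recur, every [c] of [v]
   would follow its last occurrence, whereas the head [c] of [c :: u] does not. *)
Lemma sylv_inv_eq_head_subset c u v1 v2 : sylv_inv_eq (c :: u) (v1 ++ c :: v2) ->
  c \notin v1 -> {subset v1 <= v2}.
Proof.
move=> cuv cv1 d dv1; apply/negPn/negP => dv2.
have dc : d != c by apply: contraNneq cv1 => <-.
have du : d \in u.
  by move: (sylv_inv_eq_mem d cuv); rewrite in_cons (negbTE dc) mem_cat dv1.
have := cuv d c; rewrite /= du after_last_catl ?in_cons ?negb_or ?dc //.
rewrite count_cat /= eqxx.
have := count_after_last c d u; have := sylv_inv_eq_count c cuv.
rewrite /= eqxx count_cat /= eqxx (count_memPn cv1); lia.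
Qed.

Lemma sylv_inv_eq_head_mem c u d v1 v2 : sylv_inv_eq (c :: u) (v1 ++ c :: v2) ->
  c \notin v1 -> d \in v1 -> c \in v2.
Proof.
move=> cuv cv1 dv1; apply/negPn/negP => cv2.
have dc : d != c by apply: contraNneq cv1 => <-.
have cu : c \notin u.
  apply/count_memPn; move: (sylv_inv_eq_count c cuv).
  rewrite /= eqxx count_cat /= eqxx (count_memPn cv1) (count_memPn cv2); lia.
have := cuv c d; rewrite /= (negbTE cu) eqxx after_last_catr ?mem_head //=.
rewrite (negbTE cv2) eqxx.
have := sylv_inv_eq_count d cuv; rewrite /= count_cat /= eq_sym (negbTE dc) !add0n.
move=> -> /eqP; rewrite -{2}[count_mem d v2]add0n eqn_add2r => /eqP/count_memPn.
by rewrite dv1.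
Qed.

Lemma derivable_head c u v : sylv_inv_eq (c :: u) v ->
  exists w, derivable sylv_basis v (c :: w).
Proof.
move=> cuv; have [v1 [v2 [ev cv1]]] : exists v1 v2, v = v1 ++ c :: v2 /\ c \notin v1.
  have cv : c \in v by rewrite -(sylv_inv_eq_mem c cuv) mem_head.
  exists (take (index c v) v), (drop (index c v).+1 v).
  by rewrite -drop_index // cat_take_drop in_take_leq ?index_size ?ltnn.
subst v; case: v1 cuv cv1 => [|d v1] cuv cv1.
  by exists v2; apply: der_refl.
exists (d :: v1 ++ v2); apply: derivable_move_front.
  exact: sylv_inv_eq_head_mem cuv cv1 (mem_head d v1).
exact: sylv_inv_eq_head_subset cuv cv1.
Qed.

Lemma sylv_inv_eq_derivable u v : sylv_inv_eq u v -> derivable sylv_basis u v.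
Proof.
elim: u v => [|c u IH] v uv.
  suff -> : v = [::] by apply: der_refl.
  by case: v uv => // a v /(sylv_inv_eq_count a); rewrite /= eqxx.
have [w vw] := derivable_head uv.
have uw : sylv_inv_eq u w.
  by apply: sylv_inv_eq_consK => x y; apply: etrans (uv x y) (derivable_inv_eq vw x y).
exact: derivable_trans (derivable_cons c (IH w uw)) (derivable_sym vw).
Qed.

Lemma sylv_satisfies_identity n : sylv_satisfies n sylv_identity.1 sylv_identity.2.
Proof. by move=> phi _; have := Ptree_subst_identity phi [::]; rewrite !cats0. Qed.

Lemma sylv_satisfies_change_rank n m u v :
  rank_ge2 n -> sylv_satisfies n u v -> sylv_satisfies m u v.
Proof.
move=> n2 /(sylv_satisfies_inv_eq n2)/sylv_inv_eq_derivable.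
exact: derivable_sylv_satisfies.
Qed.

Theorem theorem4p6 :
  (forall n : rank, rank_ge2 n -> sylv_finite_basis n [:: sylv_identity]) /\
  (forall n m : rank, rank_ge2 n -> rank_ge2 m ->
     forall u v : seq nat, sylv_satisfies n u v <-> sylv_satisfies m u v).
Proof.
split=> [n n2|n m n2 m2 u v]; last by split; apply: sylv_satisfies_change_rank.
split=> [p q|u v /(sylv_satisfies_inv_eq n2)/sylv_inv_eq_derivable //].
by rewrite mem_seq1 => /eqP [-> ->]; apply: sylv_satisfies_identity.
Qed.
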